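(* Let $n\ge1$, $t_1<\dots<t_n$, $p_0,\dots,p_n>0$, $p=\sum_{j=0}^n p_j\chi_{I_j}$ with $I_0=(-\infty,t_1]$, $I_j=(t_j,t_{j+1}]$ ($1\le j\le n-1$), $I_n=(t_n,\infty)$, and $q_k=p_k^{-1/2}$. Let $\Phi^\pm$ be the functions defined in the context. Then $\Phi^+$ and $\Phi^-$ are uniformly bounded on $(0,\infty)\times\mathbb{R}$, i.e. $\sup_{\lambda>0,\,x\in\mathbb{R}}\big(|\Phi^+(\lambda,x)|+|\Phi^-(\lambda,x)|\big)<\infty$.
   Context: For $z\in\mathbb{C}\setminus(-\infty,0]$, $\sqrt z$ is the principal square root. For $1\le k\le n$ let $$L_k(z)=\frac12\begin{bmatrix}\left(1+\frac{q_k}{q_{k-1}}\right)e^{it_k(q_{k-1}-q_k)\sqrt z} & \left(1-\frac{q_k}{q_{k-1}}\right)e^{-it_k(q_{k-1}+q_k)\sqrt z}\\ \left(1-\frac{q_k}{q_{k-1}}\right)e^{it_k(q_{k-1}+q_k)\sqrt z} & \left(1+\frac{q_k}{q_{k-1}}\right)e^{-it_k(q_{k-1}-q_k)\sqrt z}\end{bmatrix},\qquad R_k(z)=L_k(z)^{-1}.$$ Define $a_n^+=1$, $b_n^+=0$, $(a_l^+,b_l^+)^T=R_{l+1}(z)(a_{l+1}^+,b_{l+1}^+)^T$ for $l=n-1,\dots,0$; and $a_0^-=0$, $b_0^-=1$, $(a_j^-,b_j^-)^T=L_j(z)(a_{j-1}^-,b_{j-1}^-)^T$ for $j=1,\dots,n$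 (the connection coefficients). Set $\Phi^\pm(z,x)=a_k^\pm(z)e^{iq_k\sqrt z x}+b_k^\pm(z)e^{-iq_k\sqrt z x}$ for $x\in I_k$, $0\le k\le n$. These are solutions of $-(pf')'=zf$ with $f,pf'$ locally absolutely continuous. *)

From HB Require Import structures.
From mathcomp Require Import all_boot all_order all_algebra.
From mathcomp Require Import complex.
From mathcomp Require Import all_classical all_reals all_analysis.
Set Implicit Arguments. Unset Strict Implicit. Unset Printing Implicit Defensive.
Import Order.TTheory GRing.Theory Num.Theory.
Local Open Scope ring_scope.
Local Open Scope complex_scope.

Section Defs.
Variable R : realType.
Local Notation C := R[i].

Definition cabs (z : C) : R :=
  Num.sqrt (complex.Re z ^+ 2 + complex.Im z ^+ 2).

Definition cexp (z : C) : C :=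
  (expR (complex.Re z))%:C * (cos (complex.Im z) +i* sin (complex.Im z))%C.

(* principal square root on C \ (-oo,0]:
   sqrt(a+ib) = sqrt((|z|+a)/2) + i sgn(b) sqrt((|z|-a)/2)   (sgn b = 1 if b >= 0).
   (Its value on (-oo,0] is irrelevant here.) *)
Definition csqrt (z : C) : C :=
  (Num.sqrt ((cabs z + complex.Re z) / 2)
   +i* ((if 0 <= complex.Im z then 1 else -1) *
        Num.sqrt ((cabs z - complex.Re z) / 2)))%C.

Definition qk (p : nat -> R) (k : nat) : R := (Num.sqrt (p k))^-1.

Definition Lmx (t p : nat -> R) (k : nat) (z : C) : 'M[C]_2 :=
  let q := qk p in
  let r := (q k / q k.-1)%:C in
  let s := csqrt z in
  let e (c : R) := cexp ('i * (t k * c)%:C * s) in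
  (2^-1) *: \matrix_(i < 2, j < 2)
     match val i, val j with
     | 0, 0 => (1 + r) * e (q k.-1 - q k)
     | 0, _ => (1 - r) * e (- (q k.-1 + q k))
     | _, 0 => (1 - r) * e (q k.-1 + q k)
     | _, _ => (1 + r) * e (- (q k.-1 - q k))
     end.

Definition Rmx (t p : nat -> R) (k : nat) (z : C) : 'M[C]_2 := invmx (Lmx t p k z).

Definition col2 (a b : C) : 'cV[C]_2 :=
  \col_(i < 2) if val i == 0 then a else b.

(* (a_l^+, b_l^+) = R_{l+1} ... R_n (1,0);  coef_plus_aux m = (a_{n-m}^+, b_{n-m}^+) *)
Fixpoint coef_plus_aux (t p : nat -> R) (n : nat) (z : C) (m : nat) : 'cV[C]_2 :=
  match m with
  | 0 => col2 1 0
  | m'.+1 => Rmx t p (n - m') z *m coef_plus_aux t p n z m'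
  end.

Definition coef_plus (t p : nat -> R) (n : nat) (z : C) (l : nat) : 'cV[C]_2 :=
  coef_plus_aux t p n z (n - l).

Fixpoint coef_minus (t p : nat -> R) (z : C) (j : nat) : 'cV[C]_2 :=
  match j with
  | 0 => col2 0 1
  | j'.+1 => Lmx t p j z *m coef_minus t p z j'
  end.

(* index k of the interval I_k containing x, for t_1 < ... < t_n:
   I_0 = (-oo,t_1], I_j = (t_j,t_{j+1}], I_n = (t_n,oo);
   k = #{ j in 1..n | t_j < x } *)
Definition interval_index (t : nat -> R) (n : nat) (x : R) : nat :=
  count (fun j => t j < x) (iota 1 n).

Definition Phi_of (t p : nat -> R) (n : nat) (z : C) (x : R) (ab : nat -> 'cV[C]_2) : C :=
  let k := interval_index t n x in
  let s := csqrt z in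
  (ab k) ord0 ord0 * cexp ('i * (qk p k * x)%:C * s)
  + (ab k) ord_max ord0 * cexp (- ('i * (qk p k * x)%:C * s)).

Definition Phi_plus (t p : nat -> R) (n : nat) (z : C) (x : R) : C :=
  Phi_of t p n z x (coef_plus t p n z).

Definition Phi_minus (t p : nat -> R) (n : nat) (z : C) (x : R) : C :=
  Phi_of t p n z x (coef_minus t p z).

End Defs.

(* For lambda > 0 the principal root of lambda is real, so every exponential
   occurring in L_k, in R_k and in Phi^{+-} has modulus 1.  The entries of L_k
   are therefore bounded independently of lambda, and so are those of
   R_k = L_k^{-1}, because det L_k = q_k / q_{k-1} does not depend on lambda.
   The connection coefficients are finite products of these matrices applied to
   a fixed vector, hence bounded uniformly in lambda, and on I_k the function
   Phi^{+-} combines two of them with unimodular weights. *)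
From HB Require Import structures.
From mathcomp Require Import all_boot all_order all_algebra.
From mathcomp Require Import complex.
From mathcomp Require Import all_classical all_reals all_analysis.
From mathcomp Require Import ring.
Set Implicit Arguments. Unset Strict Implicit. Unset Printing Implicit Defensive.
Import Order.TTheory GRing.Theory Num.Theory.
Local Open Scope ring_scope.
Local Open Scope complex_scope.

Section EntryBound.
Variable K : numFieldType.

Definition mxbound m n (A : 'M[K]_(m, n)) (b : K) := forall i j, `|A i j| <= b.

Lemma mxbound_le m n (A : 'M[K]_(m, n)) b b' :
  mxbound A b -> b <= b' -> mxbound A b'.
Proof. by move=> hA hb i j; apply: le_trans (hA i j) hb. Qed.

Lemma mxbound_norm m n (A : 'M[K]_(m, n)) b : mxbound A b -> mxbound A `|b|.
Proof.
move=> hA i j; have b_ge0 : 0 <= b := le_trans (normr_ge0 _) (hA i j).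
by rewrite (ger0_norm b_ge0).
Qed.

Lemma mxbound_mul m n k (A : 'M[K]_(m, n)) (B : 'M[K]_(n, k)) a b :
  mxbound A a -> mxbound B b -> mxbound (A *m B) (n%:R * (a * b)).
Proof.
move=> hA hB i j; rewrite mxE; apply: le_trans (ler_norm_sum _ _ _) _.
rewrite mulr_natl -[n in _ *+ n]card_ord -sumr_const; apply: ler_sum => l _.
by rewrite normrM ler_pM ?normr_ge0.
Qed.

Lemma mxbound_uniform (T : Type) (D : T -> Prop) m n
    (F : nat -> T -> 'M[K]_(m, n)) N :
  (forall k, exists b, forall x, D x -> mxbound (F k x) b) ->
  exists b, forall k x, (k <= N)%N -> D x -> mxbound (F k x) b.
Proof.
move=> hF; elim: N => [|N [b hb]].
  have [b hb] := hF 0%N; exists b => k x; rewrite leqn0 => /eqP ->; exact: hb.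
(* Norms: with [D] empty the bounds [b], [b'] need not be nonnegative reals. *)
have [b' hb'] := hF N.+1; exists (`|b| + `|b'|) => k x; rewrite leq_eqVlt.
case/orP => [/eqP -> | hk] Dx.
  by apply: mxbound_le (mxbound_norm (hb' x Dx)) _; rewrite lerDr.
by apply: mxbound_le (mxbound_norm (hb k x hk Dx)) _; rewrite lerDl.
Qed.

Lemma det_mx2 (A : 'M[K]_2) : \det A = A 0 0 * A 1 1 - A 0 1 * A 1 0.
Proof.
rewrite (expand_det_row _ 0) !big_ord_recl big_ord0 addr0 /cofactor !det_mx11.
have lift01 : lift 0 0 = 1 :> 'I_2 by apply: val_inj.
have lift10 : lift 1 0 = 0 :> 'I_2 by apply: val_inj.
by rewrite !mxE /= lift01 lift10 expr0 expr1 !mul1r mulN1r mulrN.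
Qed.

Lemma mxbound_adj2 (A : 'M[K]_2) b : mxbound A b -> mxbound (\adj A) b.
Proof.
move=> hA i j; rewrite mxE /cofactor det_mx11 !mxE normrM normrX normrN1.
by rewrite expr1n mul1r.
Qed.

(* [invmx A = A] when [A] is singular, hence the summand [1]. *)
Lemma mxbound_invmx2 (A : 'M[K]_2) b :
  mxbound A b -> mxbound (invmx A) ((1 + `|\det A|^-1) * b).
Proof.
move=> hA i j; have b_ge0 : 0 <= b := le_trans (normr_ge0 _) (hA 0 0).
have scaled_ge0 : 0 <= `|\det A|^-1 * b by rewrite mulr_ge0 ?invr_ge0.
rewrite mulrDl mul1r /invmx; case: ifP => _; last exact: ler_wpDr.
rewrite mxE normrM normfV; apply: ler_wpDl => //.
by rewrite ler_wpM2l ?invr_ge0 // mxbound_adj2.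
Qed.

End EntryBound.

Section Transfer.
Variable R : realType.
Local Notation C := R[i].
Implicit Types (t p : nat -> R) (z : C).

Lemma cexpD (z w : C) : cexp (z + w) = cexp z * cexp w.
Proof.
case: z w => [a b] [c d]; rewrite /cexp /= expRD cosD sinD.
by apply/eqP; rewrite eq_complex /=; apply/andP; split; apply/eqP; ring.
Qed.

Lemma cexpNK (z : C) : cexp (- z) * cexp z = 1.
Proof.
rewrite -cexpD addNr /cexp /= expR0 cos0 sin0 mul1r.
by apply/eqP; rewrite eq_complex /= !eqxx.
Qed.

Lemma normr_cexp (z : C) : `|cexp z| = (expR (complex.Re z))%:C.
Proof.
rewrite /cexp normrM !normc_def /= expr0n addr0 sqrtr_sqr cos2Dsin2 sqrtr1.
by rewrite mulr1 ger0_norm // expR_ge0.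
Qed.

Lemma normr_cexp_iR (x : R) (s : C) :
  complex.Im s = 0 -> `|cexp ('i * x%:C * s)| = 1.
Proof.
case: s => a b /= ->; rewrite normr_cexp /=.
by rewrite !(mul0r, mulr0, mul1r, subr0, add0r, subrr, oppr0) expR0.
Qed.

Lemma Im_csqrt_ge0 (l : R) : 0 <= l -> complex.Im (csqrt l%:C) = 0.
Proof.
move=> l_ge0; rewrite /csqrt /cabs /= expr0n addr0 sqrtr_sqr ger0_norm //.
by rewrite subrr mul0r sqrtr0 mulr0.
Qed.

Definition qratio (p : nat -> R) k : C := (qk p k / qk p k.-1)%:C.

Lemma det_Lmx t p k (z : C) : \det (Lmx t p k z) = qratio p k.
Proof.
rewrite det_mx2 !mxE /= -[(qk p k / _)%:C]/(qratio p k).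
move: (qratio p k) (qk p k.-1 - qk p k) (qk p k.-1 + qk p k) => r a b.
set e := fun c : R => cexp ('i * (t k * c)%:C * csqrt z).
have eNK c : e (- c) * e c = 1 by rewrite /e mulrN rmorphN mulrN mulNr cexpNK.
have -> : 2^-1 * ((1 + r) * e a) * (2^-1 * ((1 + r) * e (- a))) -
          2^-1 * ((1 - r) * e (- b)) * (2^-1 * ((1 - r) * e b))
   = 2^-1 * 2^-1 * ((1 + r) ^+ 2 * (e (- a) * e a) - (1 - r) ^+ 2 * (e (- b) * e b)).
  by ring.
by rewrite !eNK !mulr1; field.
Qed.

Lemma mxbound_Lmx t p k (z : C) : complex.Im (csqrt z) = 0 ->
  mxbound (Lmx t p k z) (`|1 + qratio p k| + `|1 - qratio p k|).
Proof.
move=> sqrt_real i j.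
have half_le (a : C) c : `|2^-1 * (a * cexp ('i * c%:C * csqrt z))| <= `|a|.
  rewrite 2!normrM normr_cexp_iR // mulr1 ler_piMl ?normr_ge0 //.
  by rewrite normfV normr_nat invf_le1 ?ltr0n ?ler1n.
rewrite !mxE; case: i => [[|i] hi]; case: j => [[|j] hj];
  apply: le_trans (half_le _ _) _; by rewrite ?lerDl ?lerDr normr_ge0.
Qed.

Lemma mxbound_Rmx t p k (z : C) : complex.Im (csqrt z) = 0 ->
  mxbound (Rmx t p k z)
    ((1 + `|qratio p k|^-1) * (`|1 + qratio p k| + `|1 - qratio p k|)).
Proof.
move=> sqrt_real; have := mxbound_invmx2 (mxbound_Lmx t p k sqrt_real).
by rewrite det_Lmx.
Qed.

Lemma coef_minus_bounded t p j : exists b, forall z : C,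
  complex.Im (csqrt z) = 0 -> mxbound (coef_minus t p z j) b.
Proof.
elim: j => [|j [b IH]].
  by exists 1 => z _ i j; rewrite mxE; case: ifP; rewrite ?normr0 ?normr1.
eexists => z sqrt_real /=.
exact: mxbound_mul (mxbound_Lmx _ _ _ sqrt_real) (IH z sqrt_real).
Qed.

Lemma coef_plus_aux_bounded t p n m : exists b, forall z : C,
  complex.Im (csqrt z) = 0 -> mxbound (coef_plus_aux t p n z m) b.
Proof.
elim: m => [|m [b IH]].
  by exists 1 => z _ i j; rewrite mxE; case: ifP; rewrite ?normr0 ?normr1.
eexists => z sqrt_real /=.
exact: mxbound_mul (mxbound_Rmx _ _ _ sqrt_real) (IH z sqrt_real).
Qed.

Lemma interval_index_le t n x : (interval_index t n x <= n)%N.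
Proof. by rewrite /interval_index (leq_trans (count_size _ _)) ?size_iota. Qed.

Lemma normr_Phi_of_le t p n (z : C) x ab b :
  complex.Im (csqrt z) = 0 -> mxbound (ab (interval_index t n x)) b ->
  `|Phi_of t p n z x ab| <= b + b.
Proof.
move=> sqrt_real hab; rewrite /Phi_of -mulNr -mulrN -rmorphN.
apply: le_trans (ler_normD _ _) _.
by apply: lerD; rewrite normrM normr_cexp_iR // mulr1 hab.
Qed.

End Transfer.

(* The ordering of the [t_j] and the positivity of the [p_j] are not needed:
   with the junk values [0^-1 = 0] and [invmx A = A] for singular [A] the
   bounds above hold for arbitrary data. *)
Theorem lemma3p3 (R : realType) (n : nat) (t p : nat -> R) :
  (1 <= n)%N ->
  (forall j : nat, (1 <= j)%N -> (j < n)%N -> t j < t j.+1) ->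
  (forall j : nat, (j <= n)%N -> 0 < p j) ->
  exists M : R, forall (lambda x : R), 0 < lambda ->
    cabs (Phi_plus t p n (lambda%:C)%C x) + cabs (Phi_minus t p n (lambda%:C)%C x) <= M.
Proof.
move=> _ _ _.
have [bp hp] := mxbound_uniform (F := fun k z => coef_plus t p n z k) n
  (fun k => coef_plus_aux_bounded t p n (n - k)).
have [bm hm] := mxbound_uniform (F := fun k z => coef_minus t p z k) n
  (coef_minus_bounded t p).
exists (complex.Re (bp + bp + (bm + bm))) => lambda x lambda_gt0.
have sqrt_real := Im_csqrt_ge0 (ltW lambda_gt0).
have k_le := interval_index_le t n x.
have := lerD (normr_Phi_of_le p sqrt_real (hp _ _ k_le sqrt_real))
             (normr_Phi_of_le p sqrt_real (hm _ _ k_le sqrt_real)).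
by rewrite !normc_def -rmorphD lecE => /andP[].
Qed.
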